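(* Let $p$ be a prime with $p\equiv 1\pmod 3$. Then, for every integer $x$, $$(x^2+x+1)^{p-2}\equiv 1+\frac23x^{p-1}-\frac13x^{p-2}+\sum_{k=2}^{p-2}\left(k\left(\frac k3\right)+[3\mid k-1]-\frac13\right)x^{k-1}\pmod p,$$ equivalently the two sides agree in $\mathbb F_p[x]$ modulo $x^p-x$.
   Context: Here $\left(\frac{k}{3}\right)$ is the Legendre symbol modulo $3$ (equal to $0,1,-1$ according as $k\equiv 0,1,2\pmod 3$). For an assertion $A$, $[A]=1$ if $A$ holds and $[A]=0$ otherwise. The rational numbers $\frac13,\frac23$ are interpreted as elements of $\mathbb Z/p\mathbb Z$ (as $p\neq 3$), i.e., the congruence is in the ring of rationals with denominator prime to $p$. *)

From mathcomp Require Import all_boot all_order all_algebra.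
Set Implicit Arguments. Unset Strict Implicit. Unset Printing Implicit Defensive.
Import Order.TTheory GRing.Theory Num.Theory.

Definition leg3 (k : nat) : int :=
  if (k %% 3 == 0)%N then 0%R else if (k %% 3 == 1)%N then 1%R else (-1)%R.

From mathcomp Require Import all_boot all_order all_algebra.
From mathcomp Require Import finfield ring zify.
Set Implicit Arguments. Unset Strict Implicit. Unset Printing Implicit Defensive.
Import Order.TTheory GRing.Theory Num.Theory.
Local Open Scope ring_scope.

(* Write p = 3m + 1 and S(x) = sum_{k=1}^{p} c_k x^(k-1), with c_k the
   coefficient in the statement; the right-hand side is S(x) - 2/3, the terms
   k = 1, p - 1, p of S giving the three explicit terms.  On each block of three
   consecutive k the coefficients are affine in k, so summing blocks gives
   closed forms: (1 - x^3)^2 S(x) is a fixed quintic plus x^p times a quintic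
   with coefficients affine in p, and for x^3 = 1, 2 S(x) is quadratic in m.
   In F_p we have p = 0 and x^p = x.  For x^3 <> 1 the closed form collapses
   to (1 - x)(1 - x^3) = (1 - x)^2 q^p with q = x^2 + x + 1, which is
   (1 - x^3)^2 q^(p-2).  For x^3 = 1, q^2 = 3q, so q^(p-2) = 3^(p-3) q = q/9
   by Fermat. *)

Section LegendreSum.
Variable F : fieldType.
Hypothesis three_neq0 : (3 : F) != 0.

Definition leg_coef (k : nat) : F :=
  k%:R * (leg3 k)%:~R + (3 %| k - 1)%N%:R - 1 / 3.

Definition leg_sum (n : nat) (x : F) : F :=
  \sum_(1 <= k < n.+1) leg_coef k * x ^+ (k - 1).

Lemma leg_sumS n x : leg_sum n.+1 x = leg_sum n x + leg_coef n.+1 * x ^+ n.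
Proof. by rewrite /leg_sum big_nat_recr //= subSS subn0. Qed.

Lemma leg_coef_3m2 m : leg_coef (3 * m + 2) = - (3 * m + 1)%:R - 1 - 1 / 3.
Proof.
rewrite /leg_coef /leg3 (_ : 3 * m + 2 - 1 = m * 3 + 1)%N; last by lia.
rewrite mulnC modnMDl /dvdn modnMDl /= natrD mulrN1 natrD; ring.
Qed.

Lemma leg_coef_3m3 m : leg_coef (3 * m + 3) = - (1 / 3).
Proof.
rewrite /leg_coef /leg3 (_ : 3 * m + 3 = m.+1 * 3)%N; last by lia.
rewrite (_ : m.+1 * 3 - 1 = m * 3 + 2)%N; last by lia.
rewrite modnMl /dvdn modnMDl /= mulr0; ring.
Qed.

Lemma leg_coef_3m4 m : leg_coef (3 * m + 4) = (3 * m + 1)%:R + 4 - 1 / 3.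
Proof.
rewrite /leg_coef /leg3 (_ : 3 * m + 4 = m.+1 * 3 + 1)%N; last by lia.
rewrite addnK modnMDl /dvdn modnMl /= mulr1 !natrD; ring.
Qed.

Lemma leg_sum_step m x (n := (3 * m + 1)%:R : F) :
  leg_sum (3 * m.+1 + 1) x = leg_sum (3 * m + 1) x
    + x ^+ (3 * m + 1) * (- n - 4 / 3 - 1 / 3 * x + (n + 11 / 3) * x ^+ 2).
Proof.
rewrite (_ : 3 * m.+1 + 1 = (3 * m + 1).+3)%N; last by lia.
rewrite !leg_sumS !exprS.
rewrite (_ : (3 * m + 1).+1 = 3 * m + 2)%N; last by lia.
rewrite (_ : (3 * m + 2).+1 = 3 * m + 3)%N; last by lia.
rewrite (_ : (3 * m + 3).+1 = 3 * m + 4)%N; last by lia.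
rewrite leg_coef_3m2 leg_coef_3m3 leg_coef_3m4 /n; by field.
Qed.

Lemma leg_sum_ends n x : (2 < n)%N ->
  leg_sum n x = leg_coef 1 + \sum_(2 <= k < n.-1) leg_coef k * x ^+ (k - 1)
                + leg_coef n.-1 * x ^+ (n - 2) + leg_coef n * x ^+ (n - 1).
Proof.
case: n => [|[|[|n]]] // _; rewrite /= !subSS !subn0 2!leg_sumS.
by rewrite /leg_sum (@big_ltn _ _ _ 1) // expr0 mulr1.
Qed.

Definition leg_sum_base (x : F) : F :=
  5/3 - 7/3 * x - 1/3 * x ^+ 2 + 4/3 * x ^+ 3 - 2/3 * x ^+ 4 + 1/3 * x ^+ 5.

Definition leg_sum_tail (n x : F) : F :=
  (n + 4/3) + 1/3 * x - (n + 11/3) * x ^+ 2 - (n - 5/3) * x ^+ 3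
    - 1/3 * x ^+ 4 + (n + 2/3) * x ^+ 5.

Lemma leg_sum_closed m x :
  (1 - x ^+ 3) ^+ 2 * leg_sum (3 * m + 1) x =
    leg_sum_base x + x ^+ (3 * m + 1) * leg_sum_tail (3 * m + 1)%:R x.
Proof.
elim: m => [|m IH].
  by rewrite /leg_sum big_nat1 /leg_coef /leg3 /leg_sum_base /leg_sum_tail /=; field.
rewrite leg_sum_step mulrDr IH.
rewrite (_ : 3 * m.+1 + 1 = (3 * m + 1) + 3)%N; last by lia.
rewrite (natrD _ (3 * m + 1) 3) (exprD _ (3 * m + 1) 3) /leg_sum_base /leg_sum_tail.
by field.
Qed.

Lemma leg_sum_cube_root m x : x ^+ 3 = 1 ->
  2 * leg_sum (3 * m + 1) x =
    m%:R * (3 * m%:R - 1) * (1 - x) + 2 * m%:R * (2/3 - 4/3 * x - 1/3 * x ^+ 2)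
    + 2 * ((3 * m + 1)%:R + 2/3).
Proof.
move=> x3.
have rotate n a b c :
    x ^+ (3 * n + 1) * (a - b * x + c * x ^+ 2) = c + a * x - b * x ^+ 2.
  rewrite exprD exprM x3 expr1n mul1r.
  by rewrite -[c in RHS]mulr1 -x3; ring.
elim: m => [|m IH].
  by rewrite /leg_sum big_nat1 /leg_coef /leg3 /=; field.
rewrite leg_sum_step mulrDr IH rotate.
rewrite (_ : 3 * m.+1 + 1 = (3 * m + 1) + 3)%N; last by lia.
by rewrite -[m.+1]addn1 !natrD ?natrM; field.
Qed.

End LegendreSum.

Arguments leg_coef {F} k.

Lemma exprS_of_sqr (R : comPzRingType) (c q : R) k :
  q ^+ 2 = c * q -> q ^+ k.+1 = c ^+ k * q.
Proof.
move=> qq; elim: k => [|k IH]; first by rewrite expr1 expr0 mul1r.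
by rewrite exprS IH mulrCA -expr2 qq mulrA -exprSr.
Qed.

Section PrimeField.
Variable p : nat.
Hypotheses (p_prime : prime p) (p_mod3 : (p %% 3 = 1)%N).

Local Notation m := (p %/ 3)%N.

Lemma p_eq_3m1 : p = (3 * m + 1)%N.
Proof. lia. Qed.

Lemma four_le_p : (4 <= p)%N.
Proof. have := prime_gt1 p_prime; lia. Qed.

Lemma natr_Fp_neq0 n : (0 < n <= 3)%N -> (n%:R : 'F_p) != 0.
Proof.
case/andP=> n_gt0 n_le3; rewrite -(dvdn_pcharf (pchar_Fp p_prime)).
apply/negP => /(dvdn_leq n_gt0) p_le_n.
have := prime_gt1 p_prime; lia.
Qed.

Let three_neq0 : (3 : 'F_p) != 0. Proof. exact: natr_Fp_neq0. Qed.

Lemma natr_p_div3 : (m%:R : 'F_p) = - (1 / 3).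
Proof.
have : ((3 * m + 1)%:R : 'F_p) = 0 by rewrite -p_eq_3m1 pchar_Fp_0.
by rewrite natrD natrM => h; apply: (mulfI three_neq0); rewrite -[3 * _](addrK 1) h; field.
Qed.

Lemma expr_Fp_p (y : 'F_p) : y ^+ p = y.
Proof. by rewrite -[X in y ^+ X](card_Fp p_prime) expf_card. Qed.

Lemma leg_coef_p : leg_coef p = 1 - 1 / 3 :> 'F_p.
Proof.
have three_dvd : (3 %| p - 1)%N by rewrite p_eq_3m1 addnK dvdn_mulr.
by rewrite /leg_coef pchar_Fp_0 // three_dvd mul0r add0r.
Qed.

Lemma leg_coef_p_pred : leg_coef p.-1 = - (1 / 3) :> 'F_p.
Proof.
rewrite /leg_coef /leg3.
have -> : (p.-1 %% 3 = 0)%N by rewrite p_eq_3m1 addn1 /= mulnC modnMl.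
have -> : (3 %| p.-1 - 1)%N = false.
  rewrite (_ : p.-1 - 1 = (m - 1) * 3 + 2)%N; last by have := four_le_p; lia.
  by rewrite /dvdn modnMDl.
by rewrite /= mulr0 !add0r.
Qed.

Lemma leg_sum_p_expand (y : 'F_p) :
  1 + 2 / 3 * y ^+ (p - 1) - 1 / 3 * y ^+ (p - 2)
    + \sum_(2 <= k < p.-1) ((k%:R * (leg3 k)%:~R + (3 %| k - 1)%N%:R - 1 / 3) * y ^+ (k - 1))
  = leg_sum p y - 2 / 3.
Proof.
rewrite leg_sum_ends; last by have := four_le_p; lia.
rewrite leg_coef_p leg_coef_p_pred /leg_coef /leg3 /=.
by field.
Qed.

Lemma trinomial_pow_cube_root (y : 'F_p) : y ^+ 3 = 1 ->
  (y ^+ 2 + y + 1) ^+ (p - 2) = leg_sum p y - 2 / 3.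
Proof.
move=> y3; have := leg_sum_cube_root three_neq0 m y3.
rewrite -p_eq_3m1 pchar_Fp_0 // natr_p_div3 => leg_sum_y.
have q_sqr : (y ^+ 2 + y + 1) ^+ 2 = 3 * (y ^+ 2 + y + 1).
  apply/eqP; rewrite -subr_eq0 (_ : _ - _ = (y ^+ 3 - 1) * (y + 2)); last by ring.
  by rewrite y3 subrr mul0r.
have fermat3 : (3 : 'F_p) ^+ (p - 3) * 3 ^+ 2 = 1.
  apply: (mulIf three_neq0); rewrite mul1r -mulrA -exprSr -exprD.
  by rewrite (_ : (p - 3 + 3 = p)%N) ?expr_Fp_p //; have := four_le_p; lia.
rewrite (_ : p - 2 = (p - 3).+1)%N; last by have := four_le_p; lia.
rewrite (exprS_of_sqr _ q_sqr).
have nine_neq0 : (3 : 'F_p) ^+ 2 != 0 by rewrite expf_neq0.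
apply: (mulIf nine_neq0); rewrite mulrAC fermat3.
rewrite (_ : leg_sum p y = 1 / 2 * (2 * leg_sum p y)); last by field; rewrite !natr_Fp_neq0.
by rewrite leg_sum_y; field; rewrite !natr_Fp_neq0.
Qed.

Lemma trinomial_pow_generic (y : 'F_p) : y ^+ 3 != 1 ->
  (y ^+ 2 + y + 1) ^+ (p - 2) = leg_sum p y - 2 / 3.
Proof.
move=> y3; have := leg_sum_closed three_neq0 m y.
rewrite -p_eq_3m1 pchar_Fp_0 // expr_Fp_p => leg_sum_y.
have nz : (1 - y ^+ 3) ^+ 2 != 0 by rewrite expf_neq0 // subr_eq0 eq_sym.
apply: (mulfI nz); rewrite mulrBr leg_sum_y.
have -> : (1 - y ^+ 3) ^+ 2 * (y ^+ 2 + y + 1) ^+ (p - 2)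
          = (1 - y) ^+ 2 * (y ^+ 2 + y + 1) ^+ (2 + (p - 2)).
  by rewrite exprD; ring.
rewrite (_ : (2 + (p - 2) = p)%N); last by have := four_le_p; lia.
by rewrite expr_Fp_p /leg_sum_base /leg_sum_tail; field.
Qed.

End PrimeField.

Theorem corollary2p1 (p : nat) (hp : prime p) (hp3 : (p %% 3 = 1)%N) (x : int) :
  ((x%:~R : 'F_p) ^+ 2 + x%:~R + 1) ^+ (p - 2) =
    1 + 2 / 3 * (x%:~R : 'F_p) ^+ (p - 1) - 1 / 3 * (x%:~R : 'F_p) ^+ (p - 2)
    + \sum_(2 <= k < p.-1)
        ((k%:R * (leg3 k)%:~R + (3 %| k - 1)%N%:R - 1 / 3) * (x%:~R : 'F_p) ^+ (k - 1)).
Proof.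
rewrite leg_sum_p_expand //.
have [y3|y3] := eqVneq ((x%:~R : 'F_p) ^+ 3) 1.
- exact: trinomial_pow_cube_root.
- exact: trinomial_pow_generic.
Qed.
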